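(* Let $X$ be a finite set with $|X|=n$, $0\notin X$, $W=X\cup\{0\}$. Let $\mathfrak{V}$ be a $\big(\binom{n}{2}_{\,n-2}\ \binom{n}{3}_{\,3}\big)$-configuration whose point set is $\mathcal{P}_2(X)$, and let $\mathfrak{M}$ be the structure with point set $\mathcal{P}_2(W)$ whose lines are the lines of $\mathfrak{V}$ together with all sets $\{\{0,x\},\{0,y\},\{x,y\}\}$ for distinct $x,y\in X$. Let $H$ be a hyperplane of $\mathfrak{M}$, and on $X$ define the equivalence relation $x\sim y$ iff $x=y$, or $x\neq y$ and $\{x,y\}\in H$. If $\mathfrak{a}\neq\mathfrak{b}$ are equivalence classes of $\sim$, then $\{0,x\}\in H$ for all $x\in\mathfrak{a}$, or $\{0,x\}\in H$ for all $x\in\mathfrak{b}$.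
   Context: $\mathcal{P}_2(Y)$ denotes the set of $2$-element subsets of $Y$. A $(v_r\ b_k)$-configuration is a partial linear space with $v$ points and $b$ lines, each point on exactly $r$ lines and each line containing exactly $k$ points. A subspace is a set of points containing every line that meets it in at least two points; a hyperplane is a proper subspace meeting every line. *)

From mathcomp Require Import all_boot.
Set Implicit Arguments. Unset Strict Implicit. Unset Printing Implicit Defensive.

Definition P2 (T : finType) (Y : {set T}) : {set {set T}} :=
  [set A : {set T} | (A \subset Y) && (#|A| == 2)].

(* (v_r b_k)-configuration: partial linear space with v points and b lines,
   each point on exactly r lines and each line with exactly k points. *)
Definition is_configuration (T : finType) (P : {set T}) (L : {set {set T}})
    (v r b k : nat) : Prop :=
  [/\ #|P| = v, #|L| = b,
      (forall l, l \in L -> l \subset P /\ #|l| = k),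
      (forall p, p \in P -> #|[set l in L | p \in l]| = r) &
      (forall p q, p \in P -> q \in P -> p != q ->
         #|[set l in L | (p \in l) && (q \in l)]| <= 1)].

Definition subspace (T : finType) (P : {set T}) (L : {set {set T}})
    (S : {set T}) : Prop :=
  S \subset P /\ (forall l, l \in L -> 2 <= #|l :&: S| -> l \subset S).

Definition hyperplane (T : finType) (P : {set T}) (L : {set {set T}})
    (S : {set T}) : Prop :=
  [/\ subspace P L S, S != P & (forall l, l \in L -> l :&: S != set0)].

(* W = X ∪ {0} is modelled as option X, with 0 = None and x = Some x. *)
Definition embed_pt (X : finType) (p : {set X}) : {set option X} := Some @: p.

Definition M_lines (X : finType) (LV : {set {set {set X}}})
    : {set {set {set option X}}} :=
  [set [set embed_pt p | p : {set X} in l] | l : {set {set X}} in LV] :|: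
  [set [set [set None; Some x]; [set None; Some y]; [set Some x; Some y]]
     | x : X, y : X in [set y0 | y0 != x]].

Definition simH (X : finType) (H : {set {set option X}}) (x y : X) : bool :=
  (x == y) || ((x != y) && ([set Some x; Some y] \in H)).

Definition is_class (X : finType) (H : {set {set option X}}) (a : {set X}) : Prop :=
  exists x : X, a = [set y | simH H x y].

(** For distinct x, y the triangle {{0,x},{0,y},{x,y}} is a line of M, so the
    hyperplane H meets it and contains it as soon as it contains two of its
    points.  Hence {x,y} lies in H exactly when {0,x} and {0,y} are both in H
    or both outside H, i.e. x ~ y iff ({0,x} ∈ H) = ({0,y} ∈ H).  So ~ has at
    most two classes, and of two distinct ones, one consists of the x with
    {0,x} ∈ H. *)

From mathcomp Require Import all_boot.
Set Implicit Arguments. Unset Strict Implicit. Unset Printing Implicit Defensive.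

Section Hyperplane.
Variables (T : finType) (P : {set T}) (L : {set {set T}}) (S : {set T}).
Hypothesis hS : hyperplane P L S.

Lemma hyperplane_line_closed l p q r :
  l \in L -> p \in l -> q \in l -> p != q -> p \in S -> q \in S ->
  r \in l -> r \in S.
Proof.
case: hS => -[_ hsub] _ _ lL pl ql pq pS qS; apply/subsetP: r.
apply: hsub => //; have <- : #|[set p; q]| = 2 by rewrite cards2 pq.
apply: subset_leq_card.
by apply/subsetP => z; rewrite !inE => /orP[]/eqP->; rewrite ?pl ?ql ?pS ?qS.
Qed.

Lemma hyperplane_line_meet l : l \in L -> exists2 p, p \in l & p \in S.
Proof.
by case: hS => _ _ hmeet /hmeet /set0Pn[p]; rewrite inE => /andP[]; exists p.
Qed.

End Hyperplane.

Section Triangles.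
Variables (X : finType) (LV : {set {set {set X}}}) (H : {set {set option X}}).
Hypothesis hH : hyperplane (P2 [set: option X]) (M_lines LV) H.

Definition spoke (x : X) : {set option X} := [set None; Some x].
Definition edge (x y : X) : {set option X} := [set Some x; Some y].
Definition triangle (x y : X) : {set {set option X}} :=
  [set spoke x; spoke y; edge x y].

Lemma triangle_line x y : x != y -> triangle x y \in M_lines LV.
Proof.
move=> xy; rewrite inE; apply/orP; right.
by apply/imset2P; exists x y => //; rewrite inE eq_sym.
Qed.

Lemma spoke_inj : injective spoke.
Proof.
move=> x y /setP /(_ (Some x)); rewrite !inE eqxx orbT.
by case/esym/orP => // /eqP[].
Qed.

Lemma spoke_neq_edge x y z : spoke x != edge y z.
Proof. by apply/eqP => /setP /(_ None); rewrite !inE. Qed.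

Lemma edge_in_hyperplane x y : x != y ->
  (edge x y \in H) = ((spoke x \in H) == (spoke y \in H)).
Proof.
move=> xy; have tL := triangle_line xy.
have sxy : spoke x != spoke y by rewrite (inj_eq spoke_inj).
have [sxT syT eT] : [/\ spoke x \in triangle x y, spoke y \in triangle x y
                      & edge x y \in triangle x y] by rewrite !inE !eqxx !orbT.
have closed := hyperplane_line_closed hH tL.
case sxH: (spoke x \in H); case syH: (spoke y \in H) => /=.
- exact: closed sxT syT sxy sxH syH eT.
- apply/negP => eH; move/negP: syH; apply.
  by apply: closed sxT eT (spoke_neq_edge x x y) sxH eH syT.
- apply/negP => eH; move/negP: sxH; apply.
  by apply: closed syT eT (spoke_neq_edge y x y) syH eH sxT.
- have [p] := hyperplane_line_meet hH tL.
  by rewrite !inE => /orP[/orP[]|] /eqP-> //; rewrite ?sxH ?syH.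
Qed.

Lemma simHE x y : simH H x y = ((spoke x \in H) == (spoke y \in H)).
Proof.
rewrite /simH; case: eqVneq => [->|xy]; first by rewrite eqxx.
exact: edge_in_hyperplane.
Qed.

End Triangles.

Theorem lemma3p4 (X : finType) (n : nat) (hn : #|X| = n)
    (LV : {set {set {set X}}})
    (hV : is_configuration (P2 [set: X]) LV 'C(n, 2) (n - 2) 'C(n, 3) 3)
    (H : {set {set option X}})
    (hH : hyperplane (P2 [set: option X]) (M_lines LV) H)
    (a b : {set X}) (ha : is_class H a) (hb : is_class H b) (hab : a != b) :
  (forall x, x \in a -> [set None; Some x] \in H) \/
  (forall x, x \in b -> [set None; Some x] \in H).
Proof.
case: ha hb hab => x ->{a} [y ->{b}] hab.
case xH: (spoke x \in H).
  by left => z; rewrite inE (simHE hH) xH => /eqP/esym.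
case yH: (spoke y \in H).
  by right => z; rewrite inE (simHE hH) yH => /eqP/esym.
case/eqP: hab; apply/setP => z; by rewrite !inE !(simHE hH) xH yH.
Qed.
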